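(* Let $k$ be a difference field of characteristic $0$ and $R=k\{y_1,\ldots,y_n\}$ the difference polynomial ring over $k$. Let $S\subseteq \mathbb{N}[x]^n$ and let $I=\langle \mathbf{y}^{\mathbf{u}}:\mathbf{u}\in S\rangle$ be the well-mixed closure of the set of monomials $\{\mathbf{y}^{\mathbf{u}}:\mathbf{u}\in S\}$. Then $I$ is generated by a finite set of monomials as a well-mixed $\sigma$-ideal, i.e. there is a finite set $F$ of monomials of $R$ with $I=\langle F\rangle$.
   Context: A difference field (σ-field) is a field $k$ with a ring endomorphism $\sigma:k\to k$. The difference polynomial ring $R=k\{y_1,\ldots,y_n\}$ is the polynomial ring over $k$ in the infinitely many variables $\sigma^j(y_i)$ ($1\le i\le n$, $j\ge 0$), with $\sigma$ extended by $\sigma(\sigma^j(y_i))=\sigma^{j+1}(y_i)$. Symbolic exponents: for $p=\sum_{i=0}^s c_ix^i\in\mathbb{N}[x]$ and $a\in R$, $a^p=\prod_{i=0}^s(\sigma^i(a))^{c_i}$. For $\mathbf{u}=(u_1,\ldots,u_n)\in\mathbb{N}[x]^n$, the monomial $\mathbf{y}^{\mathbf{u}}$ is $y_1^{u_1}\cdots y_n^{u_n}$. A $\sigma$-ideal is an ideal $I$ with $\sigma(I)\subseteq I$; it is well-mixed if $ab\in I$ implies $a\sigma(b)\in I$ for all $a,b\in R$. For $F\subseteq R$, $\langle F\rangle$ denotes the smallest well-mixed $\sigma$-ideal containing $F$. *)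

From HB Require Import structures.
From mathcomp Require Import all_boot all_order all_algebra.
From mathcomp Require Import finmap.
From mathcomp.multinomials Require Import monalg.

Set Implicit Arguments.
Unset Strict Implicit.
Unset Printing Implicit Defensive.

Import GRing.Theory.
Local Open Scope ring_scope.

(* The difference polynomial ring k{y_1,...,y_n}: the polynomial ring over k
   in the variables sigma^j(y_i), indexed by (i, j) : 'I_n * nat. *)
Notation dpoly k n := {malg k[{cmonom ('I_n * nat)%type}]}.

Definition dvar (k : fieldType) (n : nat) (i : 'I_n) (j : nat) : dpoly k n :=
  << ucm (i, j) >>.

Definition dsigma (k : fieldType) (n : nat) (s : {rmorphism k -> k})
  (p : dpoly k n) : dpoly k n :=
  mmap (fun c : k => (s c)%:MP : dpoly k n)
       (fun m : {cmonom ('I_n * nat)%type} =>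
          \prod_(x <- finsupp m) (dvar k x.1 x.2.+1) ^+ (m x)) p.

(* symbolic exponent a^p for p = sum_i c_i x^i in N[x] *)
Definition sexp (k : fieldType) (n : nat) (s : {rmorphism k -> k})
  (a : dpoly k n) (p : {poly nat}) : dpoly k n :=
  \prod_(i < size p) (iter i (dsigma s) a) ^+ (nth 0%N (polyseq p) i).

Definition dmonomial (k : fieldType) (n : nat) (s : {rmorphism k -> k})
  (u : 'I_n -> {poly nat}) : dpoly k n :=
  \prod_(i < n) sexp s (dvar k i 0) (u i).

Definition is_dmonomial (k : fieldType) (n : nat) (s : {rmorphism k -> k})
  (a : dpoly k n) : Prop :=
  exists u : 'I_n -> {poly nat}, a = dmonomial s u.

Definition is_ideal (k : fieldType) (n : nat) (I : dpoly k n -> Prop) : Prop :=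
  [/\ I 0,
      (forall a b, I a -> I b -> I (a + b)) &
      (forall r a, I a -> I (r * a))].

Definition is_wm_sigma_ideal (k : fieldType) (n : nat) (s : {rmorphism k -> k})
  (I : dpoly k n -> Prop) : Prop :=
  [/\ is_ideal I,
      (forall a, I a -> I (dsigma s a)) &
      (forall a b, I (a * b) -> I (a * dsigma s b))].

Definition wm_closure (k : fieldType) (n : nat) (s : {rmorphism k -> k})
  (F : dpoly k n -> Prop) : dpoly k n -> Prop :=
  fun a => forall I, is_wm_sigma_ideal s I -> (forall f, F f -> I f) -> I a.

From Stdlib Require Import Classical ClassicalEpsilon.
From HB Require Import structures.
From mathcomp Require Import all_boot all_order all_algebra.
From mathcomp Require Import finmap.
From mathcomp.multinomials Require Import monalg.
Import GRing.Theory.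

Set Implicit Arguments.
Unset Strict Implicit.
Unset Printing Implicit Defensive.

(* For u, v in N[x] write u <= v when, for every t, the coefficients of u of
   degree >= t sum to at most those of v.  If u <= v componentwise, then y^v
   lies in every well-mixed sigma-ideal containing y^u: v is reached from u by
   adding exponents (ideal property) and by moving one unit of exponent from
   sigma^e(y_i) to sigma^e'(y_i) with e <= e' (a b in I implies a sigma(b) in I).
   Moreover <= is a well-quasi-order.  If u_0 is not below u_m, the tail sums
   of u_m drop under those of u_0 at some t0 <= deg u_0, and from t0 on they
   are bounded by B = u_0(1); comparing u_m with later terms is then decided by
   finitely many natural numbers (the tail sums before t0 and, for each b < B,
   the first degree after t0 where the tail sum is at most b), so Dickson's
   lemma applies.  Hence S has a finite basis for <=, and its monomials
   generate I. *)

Definition wqo (T : Type) (R : T -> T -> Prop) :=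
  forall f : nat -> T, exists i j, (i < j)%N /\ R (f i) (f j).

Definition transitive_rel (T : Type) (R : T -> T -> Prop) :=
  forall y x z, R x y -> R y z -> R x z.

Lemma wqo_leq : wqo (fun a b : nat => (a <= b)%N).
Proof.
suff wqo_below m (f : nat -> nat) : (f 0 <= m)%N ->
    exists i j, (i < j)%N /\ (f i <= f j)%N by move=> f; exact: wqo_below.
elim: m f => [|m IH] f f0m.
  by exists 0, 1; split => //; move: f0m; rewrite leqn0 => /eqP ->.
have [le01|lt10] := leqP (f 0) (f 1); first by exists 0, 1.
have [i [j [lt_ij le_fij]]] := IH (fun k => f k.+1) (leq_trans lt10 f0m).
by exists i.+1, j.+1.
Qed.

Lemma wqo_comap (T U : Type) (R : U -> U -> Prop) (g : T -> U) :
  wqo R -> wqo (fun a b => R (g a) (g b)).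
Proof. by move=> wqoR f; apply: (wqoR (fun k => g (f k))). Qed.

Lemma wqo_eventually_extendable (T : Type) (R : T -> T -> Prop) (f : nat -> T) :
  wqo R -> exists N, forall i, (N <= i)%N -> exists j, (i < j)%N /\ R (f i) (f j).
Proof.
move=> wqoR; apply: NNPP => never.
have terminal_after N : exists i,
    (N <= i)%N /\ forall j, (i < j)%N -> ~ R (f i) (f j).
  apply: NNPP => no_terminal; apply: never; exists N => i le_Ni.
  apply: NNPP => no_ext; apply: no_terminal; exists i; split => // j lt_ij Rij.
  by apply: no_ext; exists j.
have [h h_terminal] := ClassicalEpsilon.choice _ terminal_after.
pose g k := iter k (fun m => h m.+1) (h 0).
have g_incr : {homo g : i j / (i < j)%N}.
  by apply: homo_ltn => [y x z|i]; [exact: ltn_trans | exact: (h_terminal _).1].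
have [i [j [lt_ij Rgij]]] := wqoR (fun k => f (g k)).
have g_terminal k : forall j, (g k < j)%N -> ~ R (f (g k)) (f j).
  by case: k => [|k]; [exact: (h_terminal 0).2 | exact: (h_terminal _).2].
exact: g_terminal i (g j) (g_incr _ _ lt_ij) Rgij.
Qed.

Lemma wqo_chain (T : Type) (R : T -> T -> Prop) (f : nat -> T) : wqo R ->
  exists phi : nat -> nat,
    (forall i, (phi i < phi i.+1)%N) /\ forall i, R (f (phi i)) (f (phi i.+1)).
Proof.
move=> /(wqo_eventually_extendable f) [N extendable].
have successor i : exists j, (N <= i)%N -> (i < j)%N /\ R (f i) (f j).
  have [le_Ni|_] := boolP (N <= i)%N; last by exists 0.
  by have [j ?] := extendable i le_Ni; exists j.
have [next nextP] := ClassicalEpsilon.choice _ successor.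
pose phi k := iter k next N.
have phi_ge k : (N <= phi k)%N.
  by elim: k => [|k IH] //=; exact: leq_trans IH (ltnW (nextP _ IH).1).
by exists phi; split => i; case: (nextP _ (phi_ge i)).
Qed.

Lemma wqo_meet (T : Type) (R1 R2 : T -> T -> Prop) :
  wqo R1 -> transitive_rel R1 -> wqo R2 -> wqo (fun a b => R1 a b /\ R2 a b).
Proof.
move=> wqo1 trans1 wqo2 f.
have [phi [phi_incr R1_chain]] := wqo_chain f wqo1.
have [i [j [lt_ij R2ij]]] := wqo2 (fun k => f (phi k)).
exists (phi i), (phi j); split; last split => //.
- exact: homo_ltn ltn_trans phi_incr _ _ lt_ij.
- by have /(_ i j lt_ij) := homo_ltn (f := fun k => f (phi k)) trans1 R1_chain.
Qed.

Lemma transitive_bigmeet (I T : Type) (R : I -> T -> T -> Prop) (P : I -> Prop) :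
  (forall i, transitive_rel (R i)) ->
  transitive_rel (fun a b => forall i, P i -> R i a b).
Proof. by move=> transR y x z Rxy Ryz i Pi; apply: transR (Rxy i Pi) (Ryz i Pi). Qed.

Lemma wqo_bigmeet (I : eqType) (T : Type) (R : I -> T -> T -> Prop) (l : seq I) :
  (forall i, wqo (R i)) -> (forall i, transitive_rel (R i)) ->
  wqo (fun a b => forall i, i \in l -> R i a b).
Proof.
move=> wqoR transR; elim: l => [|x l IH] f; first by exists 0, 1.
have [i [j [lt_ij [Rx Rl]]]] := wqo_meet (wqoR x) (transR x) IH f.
by exists i, j; split => // y; rewrite in_cons => /predU1P [->|/Rl].
Qed.

Lemma wqo_leq_on (I : eqType) (T : Type) (g : I -> T -> nat) (l : seq I) :
  wqo (fun a b => forall i, i \in l -> (g i a <= g i b)%N).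
Proof.
apply: (wqo_bigmeet (R := fun i a b => (g i a <= g i b)%N)) => i.
  exact: wqo_comap wqo_leq.
by move=> y x z; apply: leq_trans.
Qed.

Lemma transitive_leq_on (I T : Type) (g : I -> T -> nat) (P : I -> Prop) :
  transitive_rel (fun a b => forall i, P i -> (g i a <= g i b)%N).
Proof. by apply: transitive_bigmeet => i y x z; apply: leq_trans. Qed.

Lemma wqo_finite_basis (T : Type) (R : T -> T -> Prop) (x0 : T) (S : T -> Prop) :
  wqo R -> exists B : seq T,
    (forall u, List.In u B -> S u) /\
    forall v, S v -> exists2 u, List.In u B & R u v.
Proof.
move=> wqoR; apply: NNPP => no_basis.
have escape (B : seq T) : exists v, (forall u, List.In u B -> S u) ->
    S v /\ forall u, List.In u B -> ~ R u v.
  have [BS|] := classic (forall u, List.In u B -> S u); last by exists x0.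
  apply: NNPP => none; apply: no_basis; exists B; split => // v Sv.
  apply: NNPP => no_below; apply: none; exists v => _; split => // u uB Ruv.
  by apply: no_below; exists u.
have [next nextP] := ClassicalEpsilon.choice _ escape.
pose L := fix L k := if k is k'.+1 then next (L k') :: L k' else [::].
have LS k u : List.In u (L k) -> S u.
  elim: k u => [|k IH] u //= [<-|]; last exact: IH.
  by case: (nextP _ IH).
have L_grows i j : (i < j)%N -> List.In (next (L i)) (L j).
  elim: j => // j IH; rewrite ltnS leq_eqVlt => /predU1P [-> | /IH]; by [left|right].
have [i [j [lt_ij Rij]]] := wqoR (fun k => next (L k)).
by have [_ /(_ _ (L_grows _ _ lt_ij))] := nextP _ (LS j).
Qed.

Lemma map_InP (T : Type) (U : eqType) (g : T -> U) (l : seq T) (y : U) :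
  reflect (exists2 x, List.In x l & y = g x) (y \in map g l).
Proof.
elim: l => [|x l IH] /=; first by right; case.
rewrite in_cons; apply: (iffP orP) => [[/eqP ->|/IH [z zl ->]]|[z [<-|zl] yz]].
- by exists x; [left|].
- by exists z; [right|].
- by left; rewrite yz.
- by right; apply/IH; exists z.
Qed.

Definition tailsum (p : seq nat) (t : nat) : nat :=
  \sum_(t <= j < size p) nth 0 p j.

Definition tail_le (p q : seq nat) : Prop := forall t, tailsum p t <= tailsum q t.

Lemma transitive_tail_le : transitive_rel tail_le.
Proof. by move=> q p r le_pq le_qr t; exact: leq_trans (le_pq t) (le_qr t). Qed.

Lemma tailsum_oversize p t : size p <= t -> tailsum p t = 0.
Proof. by move=> le_pt; rewrite /tailsum big_geq. Qed.

Lemma tailsum_nonincr p t1 t2 : t1 <= t2 -> tailsum p t2 <= tailsum p t1.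
Proof.
move=> le12; have [le2p|/ltnW lt_p2] := leqP t2 (size p).
  by rewrite /tailsum (big_cat_nat le12 le2p) leq_addl.
by rewrite tailsum_oversize.
Qed.

Lemma tailsum_widen p t N : size p <= N ->
  tailsum p t = \sum_(t <= j < N) nth 0 p j.
Proof.
move=> le_pN; rewrite /tailsum (big_nat_widen _ _ _ _ _ le_pN) big_mkcond /=.
by apply: eq_bigr => j _; case: ltnP => // /(nth_default 0) ->.
Qed.

Lemma first_below_ex t0 b p : exists k, tailsum p (t0 + k) <= b.
Proof. by exists (size p); rewrite tailsum_oversize // leq_addl. Qed.

Definition first_below t0 b p : nat := ex_minn (first_below_ex t0 b p).

Lemma ltn_first_below t0 b p k :
  (k < first_below t0 b p) = (b < tailsum p (t0 + k)).
Proof.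
rewrite /first_below; case: ex_minnP => m le_mb m_min; rewrite !ltnNge.
apply/idP/idP; apply: contra; first exact: m_min.
by move=> le_mk; apply: leq_trans le_mb; rewrite tailsum_nonincr // leq_add2l.
Qed.

Lemma tail_le_of_first_below t0 B a q :
  tailsum a t0 <= B ->
  (forall t, t < t0 -> tailsum a t <= tailsum q t) ->
  (forall b, b < B -> first_below t0 b a <= first_below t0 b q) ->
  tail_le a q.
Proof.
move=> le_aB le_below le_first t.
have [/le_below //|le_t0t] := ltnP t t0.
rewrite -(subnKC le_t0t); move: (t - t0) => k.
case E: (tailsum a _) => [//|b].
have lt_bB : b < B.
  by apply: leq_trans le_aB; rewrite -E tailsum_nonincr // leq_addr.
have lt_ka : k < first_below t0 b a by rewrite ltn_first_below E.
by rewrite -ltn_first_below (leq_trans lt_ka (le_first b lt_bB)).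
Qed.

Lemma wqo_tail_le : wqo tail_le.
Proof.
move=> f.
have [[m m_gt0 le_0m]|not_above] :=
  classic (exists2 m, 0 < m & tail_le (f 0) (f m)); first by exists 0, m.
pose N := size (f 0); pose B := tailsum (f 0) 0.
pose tailsum_at t p := tailsum p t.
pose cuts := [seq (t0, b) | t0 <- iota 0 N, b <- iota 0 B].
have [i [j [lt_ij [le_ts le_first]]]] :=
  wqo_meet (wqo_leq_on tailsum_at (iota 0 N)) (@transitive_leq_on _ _ tailsum_at _)
    (wqo_leq_on (fun c => first_below c.1 c.2) cuts) (fun m => f m.+1).
exists i.+1, j.+1; split => //.
have [t0 lt_t0] : exists t0, tailsum (f i.+1) t0 < tailsum (f 0) t0.
  apply: NNPP => none; apply: not_above; exists i.+1 => // t.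
  by rewrite leqNgt; apply/negP => lt_t; apply: none; exists t.
have lt_t0N : t0 < N.
  by rewrite ltnNge; apply: contraTN lt_t0 => /tailsum_oversize ->.
apply: (tail_le_of_first_below (t0 := t0) (B := B)).
- exact: ltnW (leq_trans lt_t0 (tailsum_nonincr _ (leq0n _))).
- by move=> t lt_t; apply: le_ts; rewrite mem_iota (ltn_trans lt_t lt_t0N).
- by move=> b lt_b; apply: (le_first (t0, b)); apply: allpairs_f; rewrite mem_iota.
Qed.

Definition decr (g : nat -> nat) (e j : nat) : nat := g j - (j == e).

Lemma sum_decr (g : nat -> nat) e t N : e < N -> 0 < g e ->
  \sum_(t <= j < N) g j = \sum_(t <= j < N) decr g e j + (t <= e).
Proof.
move=> lt_eN g_pos.
have -> : (t <= e : nat) = \sum_(t <= j < N | j == e) 1.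
  by rewrite big_nat1_eq lt_eN andbT; case: (t <= e).
rewrite [X in _ = _ + X]big_mkcond -big_split /=; apply: eq_bigr => j _; rewrite /decr.
by case: eqP => [->|_]; rewrite ?subn0 ?addn0 // addn1 subn1 prednK.
Qed.

Lemma last_positive (g : nat -> nat) t N : 0 < \sum_(t <= j < N) g j ->
  exists e, [/\ t <= e < N, 0 < g e & forall j, e < j < N -> g j = 0].
Proof.
elim: N => [|N IH]; first by rewrite big_geq.
have [lt_Nt|le_tN] := ltnP N t; first by rewrite big_geq.
rewrite big_nat_recr //=; case: (posnP (g N)) => [gN0|gN_pos _].
  rewrite gN0 addn0 => /IH [e [/andP [le_te lt_eN] ge_pos g_above]].
  exists e; split => //; first by rewrite le_te ltnS ltnW.
  move=> j /andP [lt_ej]; rewrite ltnS leq_eqVlt => /predU1P [-> //|lt_jN].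
  by apply: g_above; rewrite lt_ej.
exists N; split => //; first by rewrite le_tN ltnSn.
by move=> j /andP [lt_Nj]; rewrite ltnS leqNgt lt_Nj.
Qed.

Section Transfer.
Variables (R : comNzRingType) (I : R -> Prop).
Local Open Scope ring_scope.

(* The cofactor r is what lets the well-mixed rule act on a single factor of a
   product. *)
Definition transfer (x y : R) : Prop := forall r, I (r * x) -> I (r * y).

Lemma transfer_mul x1 y1 x2 y2 :
  transfer x1 y1 -> transfer x2 y2 -> transfer (x1 * x2) (y1 * y2).
Proof.
move=> tr1 tr2 r; rewrite mulrA => /tr2; rewrite mulrAC => /tr1.
by rewrite mulrAC -mulrA.
Qed.

Hypothesis mulI : forall r x, I x -> I (r * x).

Lemma transfer_1 y : transfer 1 y.
Proof. by move=> r; rewrite mulr1 mulrC; apply: mulI. Qed.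

Variable f : R -> R.
Hypothesis wmI : forall x y, I (x * y) -> I (x * f y).

Lemma transfer_iter a e1 e2 :
  (e1 <= e2)%N -> transfer (iter e1 f a) (iter e2 f a).
Proof.
move=> /subnKC <-; elim: (e2 - e1)%N => [|d IH] r; first by rewrite addn0.
by rewrite addnS => /IH /wmI.
Qed.

Definition sympow (a : R) (N : nat) (g : nat -> nat) : R :=
  \prod_(j < N) iter j f a ^+ g j.

Lemma sympow_decr a N g e : (e < N)%N -> (0 < g e)%N ->
  sympow a N g = iter e f a * sympow a N (decr g e).
Proof.
move=> lt_eN g_pos; rewrite /sympow (bigD1 (Ordinal lt_eN)) //.
rewrite [in RHS](bigD1 (Ordinal lt_eN)) // mulrA -exprS /decr eqxx subn1 prednK //.
congr (_ * _); apply: eq_bigr => j ne_je.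
by rewrite -val_eqE in ne_je; rewrite (negbTE ne_je) subn0.
Qed.

Lemma transfer_sympow a N g h :
  (forall t, \sum_(t <= j < N) g j <= \sum_(t <= j < N) h j)%N ->
  transfer (sympow a N g) (sympow a N h).
Proof.
move Em: (\sum_(0 <= j < N) g j)%N => m.
elim: m g h Em => [|m IH] g h Em le_gh.
  move/eqP: Em; rewrite big_mkord sum_nat_eq0 => /forallP g0.
  rewrite {1}/sympow big1 => [|j _]; first exact: transfer_1.
  by move/implyP/(_ isT)/eqP: (g0 j) => ->; rewrite expr0.
have /last_positive [e [/andP [_ lt_eN] ge_pos g_above]] :
  (0 < \sum_(0 <= j < N) g j)%N by rewrite Em.
have /last_positive [e' [/andP [le_ee' lt_e'N] he_pos _]] :
    (0 < \sum_(e <= j < N) h j)%N.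
  by apply: leq_trans (le_gh e); rewrite (sum_decr _ lt_eN ge_pos) leqnn addn1.
rewrite (sympow_decr _ lt_eN ge_pos) (sympow_decr _ lt_e'N he_pos).
apply: transfer_mul; first exact: transfer_iter.
apply: IH => [|t].
  by move: Em; rewrite (sum_decr _ lt_eN ge_pos) addn1 => -[].
have := le_gh t; rewrite (sum_decr t lt_eN ge_pos) (sum_decr t lt_e'N he_pos).
have [le_te|lt_et _] := leqP t e.
  by rewrite (leq_trans le_te le_ee') leq_add2r.
rewrite big_nat_cond big1 // => j /andP [/andP [le_tj lt_jN] _].
by rewrite /decr g_above ?(leq_trans lt_et le_tj).
Qed.

Lemma transfer_tail_le a (p q : seq nat) :
  tail_le p q ->
  transfer (sympow a (size p) (nth 0 p)) (sympow a (size q) (nth 0 q)).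
Proof.
pose N := maxn (size p) (size q).
have widen (s : seq nat) : (size s <= N)%N ->
    sympow a (size s) (nth 0 s) = sympow a N (nth 0 s).
  move=> le_sN; rewrite /sympow.
  rewrite (big_ord_widen N (fun j => iter j f a ^+ nth 0 s j) le_sN) big_mkcond.
  by apply: eq_bigr => j _; case: ltnP => // /(nth_default 0) ->; rewrite expr0.
move=> le_pq; rewrite !widen ?leq_maxl ?leq_maxr //.
apply: transfer_sympow => t.
by rewrite -!tailsum_widen ?leq_maxl ?leq_maxr.
Qed.
End Transfer.

Local Open Scope ring_scope.

Lemma transfer_dmonomial (k : fieldType) (s : {rmorphism k -> k}) (n : nat)
    (I : dpoly k n -> Prop) (u v : 'I_n -> {poly nat}) :
  is_wm_sigma_ideal s I -> (forall i, tail_le (u i) (v i)) ->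
  transfer I (dmonomial s u) (dmonomial s v).
Proof.
move=> [[_ _ mulI] _ wmI] le_uv.
apply: (big_ind2 (transfer I)) => [//|x1 x2 y1 y2|i _]; first exact: transfer_mul.
exact: (transfer_tail_le mulI wmI (le_uv i)).
Qed.

Unset Implicit Arguments.
Set Strict Implicit.

Theorem theorem4p10 (k : fieldType) (s : {rmorphism k -> k})
  (hchar : [pchar k] =i pred0) (n : nat)
  (S : ('I_n -> {poly nat}) -> Prop) :
  exists F : seq (dpoly k n),
    (forall f, f \in F -> is_dmonomial s f) /\
    (forall a,
       wm_closure s (fun f => exists2 u, S u & f = dmonomial s u) a <->
       wm_closure s (fun f => f \in F) a).
Proof.
pose le (u v : 'I_n -> {poly nat}) :=
  forall i, i \in enum 'I_n -> tail_le (u i) (v i).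
have wqo_le : wqo le.
  apply: (wqo_bigmeet (R := fun i u v => tail_le (u i) (v i))) => i.
    exact: wqo_comap wqo_tail_le.
  by move=> y x z; apply: transitive_tail_le.
have [B [BS B_basis]] := wqo_finite_basis (fun _ => 0) S wqo_le.
exists (map (dmonomial s) B); split => [f /map_InP [u _ ->]|a]; first by exists u.
split=> a_in I I_wm genI; apply: (a_in I I_wm) => f; last first.
  by case/map_InP => u uB ->; apply: genI; exists u => //; apply: BS.
case=> u Su ->; have [u0 u0B le_u0u] := B_basis u Su.
rewrite -[dmonomial s u]mul1r; apply: (transfer_dmonomial I_wm (u := u0)).
  by move=> i; apply: le_u0u; rewrite mem_enum.
by rewrite mul1r; apply: genI; apply/map_InP; exists u0.
Qed.
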